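(* Let $(A,\cdot,[\,,\,],\varepsilon)$ be an $F$-manifold color algebra and let $(V,\rho,\mu)$ be a representation of $A$. On the $G$-graded vector space $A\oplus V$ (with $(A\oplus V)_g=A_g\oplus V_g$) define, for homogeneous $x_1+v_1,\,x_2+v_2$ (with $x_i,v_i$ of the same degree as $x_i+v_i$), $$[x_1+v_1,x_2+v_2]_\rho=[x_1,x_2]+\rho(x_1)v_2-\varepsilon(x_1,x_2)\rho(x_2)v_1,$$ $$(x_1+v_1)\cdot_\mu(x_2+v_2)=x_1\cdot x_2+\mu(x_1)v_2+\varepsilon(x_1,x_2)\mu(x_2)v_1,$$ extended bilinearly. Then $(A\oplus V,\cdot_\mu,[\,,\,]_\rho,\varepsilon)$ is an $F$-manifold color algebra.
   Context: $G$ is an abelian group and $\varepsilon:G\times G\to\mathbb K\setminus\{0\}$ is a skew-symmetric bicharacter: $\varepsilon(a,b)\varepsilon(b,a)=1$, $\varepsilon(a,b+c)=\varepsilon(a,b)\varepsilon(a,c)$, $\varepsilon(a+b,c)=\varepsilon(a,c)\varepsilon(b,c)$; $\mathbb K$ is an algebraically closed field of characteristic zero and all spaces are finite-dimensional. For homogeneous elements $x\in A_a,y\in A_b$ one writes $\varepsilon(x,y)$ for $\varepsilon(a,b)$, $\varepsilon(x,y+z)$ for $\varepsilon(a,b+c)$, etc. An $\varepsilon$-commutative associative algebra is a $G$-graded associative algebra $(A,\cdot)$ with $A_a\cdot A_b\subseteq A_{a+b}$ and $x\cdot y=\varepsilon(x,y)y\cdot x$ for homogeneous $x,y$. A Lie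 color algebra is a $G$-graded space $A$ with bilinear $[\,,\,]$ such that $[A_a,A_b]\subseteq A_{a+b}$, $[x,y]=-\varepsilon(x,y)[y,x]$, and $\varepsilon(z,x)[x,[y,z]]+\varepsilon(y,z)[z,[x,y]]+\varepsilon(x,y)[y,[z,x]]=0$ for homogeneous $x,y,z$. An $F$-manifold color algebra is $(A,\cdot,[\,,\,],\varepsilon)$ where $(A,\cdot,\varepsilon)$ is an $\varepsilon$-commutative associative algebra and $(A,[\,,\,],\varepsilon)$ is a Lie color algebra such that for all homogeneous $x,y,z,w$: $P_{x\cdot y}(z,w)=x\cdot P_y(z,w)+\varepsilon(x,y)y\cdot P_x(z,w)$, where $P_x(y,z)=[x,y\cdot z]-[x,y]\cdot z-\varepsilon(x,y)y\cdot[x,z]$. For a $G$-graded space $V$, a representation of the $\varepsilon$-commutative associative algebra $(A,\cdot,\varepsilon)$ is a linear map $\mu:A\to\mathfrak{gl}(V)$ with $\mu(x)V_a\subseteq V_{a+b}$ for $x\in A_b$ and $\mu(x\cdot y)=\mu(x)\mu(y)$; a representation of the Lie color algebra is a linear $\rho:A\to\mathfrak{gl}(V)$ with $\rho(x)V_a\subseteq V_{a+b}$ for $x\in A_b$ and $\rho([x,y])=\rho(x)\rho(y)-\varepsilon(x,y)\rho(y)\rho(x)$. A representation of the $F$-manifold color algebra $A$ is a triple $(V,\rho,\mu)$ where $\rho$ is a representation of the Lie color algebra, $\mu$ a representation of the $\varepsilon$-commutative associative algebra, and for all homogeneous $x_1,x_2,x_3$: $R(x_1\cdot x_2,x_3)=\mu(x_1)R(x_2,x_3)+\varepsilon(x_1,x_2)\mu(x_2)R(x_1,x_3)$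 and $\mu(P_{x_1}(x_2,x_3))=\varepsilon(x_1,x_2+x_3)S(x_2,x_3)\mu(x_1)-\mu(x_1)S(x_2,x_3)$, where $R(x_1,x_2)=\rho(x_1)\mu(x_2)-\varepsilon(x_1,x_2)\mu(x_2)\rho(x_1)-\mu([x_1,x_2])$ and $S(x_1,x_2)=\mu(x_1)\rho(x_2)+\varepsilon(x_1,x_2)\mu(x_2)\rho(x_1)-\rho(x_1\cdot x_2)$. *)

From HB Require Import structures.
From mathcomp Require Import all_boot all_order all_algebra.
Set Implicit Arguments. Unset Strict Implicit. Unset Printing Implicit Defensive.
Import Order.TTheory GRing.Theory Num.Theory.
Local Open Scope ring_scope.

Definition skew_bicharacter (G : zmodType) (K : fieldType) (eps : G -> G -> K) :=
  [/\ forall a b, eps a b != 0,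
      forall a b, eps a b * eps b a = 1,
      forall a b c, eps a (b + c) = eps a b * eps a c
    & forall a b c, eps (a + b) c = eps a c * eps b c].

Definition graded_space (G : zmodType) (K : fieldType) (V : vectType K)
    (D : G -> {vspace V}) :=
  exists s : seq G,
    [/\ uniq s,
        forall g, g \notin s -> D g = 0%VS,
        (\sum_(g <- s) D g)%VS = fullv
      & directv (\sum_(g <- s) D g)].

Definition bilinear_op (K : fieldType) (V : vectType K) (op : V -> V -> V) :=
  (forall k x y z, op (k *: x + y) z = k *: op x z + op y z) /\
  (forall k x y z, op z (k *: x + y) = k *: op z x + op z y).

Definition graded_op (G : zmodType) (K : fieldType) (V : vectType K)
    (D : G -> {vspace V}) (op : V -> V -> V) :=
  forall a b x y, x \in D a -> y \in D b -> op x y \in D (a + b).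

Definition eps_comm_assoc_alg (G : zmodType) (K : fieldType) (eps : G -> G -> K)
    (A : vectType K) (D : G -> {vspace A}) (mul : A -> A -> A) :=
  [/\ graded_space D, bilinear_op mul, graded_op D mul,
      forall x y z, mul x (mul y z) = mul (mul x y) z
    & forall a b x y, x \in D a -> y \in D b -> mul x y = eps a b *: mul y x].

Definition lie_color_alg (G : zmodType) (K : fieldType) (eps : G -> G -> K)
    (A : vectType K) (D : G -> {vspace A}) (br : A -> A -> A) :=
  [/\ graded_space D, bilinear_op br, graded_op D br,
      forall a b x y, x \in D a -> y \in D b -> br x y = - (eps a b *: br y x)
    & forall a b c x y z, x \in D a -> y \in D b -> z \in D c ->
        eps c a *: br x (br y z) + eps b c *: br z (br x y)
          + eps a b *: br y (br z x) = 0].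

(* P_x(y,z) = [x, y.z] - [x,y].z - eps(x,y) y.[x,z], x of degree a, y of degree b *)
Definition Pop (G : zmodType) (K : fieldType) (eps : G -> G -> K)
    (A : vectType K) (mul br : A -> A -> A) (a b : G) (x y z : A) : A :=
  br x (mul y z) - mul (br x y) z - eps a b *: mul y (br x z).

Definition F_manifold_color_alg (G : zmodType) (K : fieldType) (eps : G -> G -> K)
    (A : vectType K) (D : G -> {vspace A}) (mul br : A -> A -> A) :=
  [/\ eps_comm_assoc_alg eps D mul, lie_color_alg eps D br
    & forall a b c x y z w, x \in D a -> y \in D b -> z \in D c ->
        Pop eps mul br (a + b) c (mul x y) z w
        = mul x (Pop eps mul br b c y z w) + eps a b *: mul y (Pop eps mul br a c x z w)].

Definition Rop (G : zmodType) (K : fieldType) (eps : G -> G -> K)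
    (A V : vectType K) (br : A -> A -> A) (rho mu : A -> V -> V)
    (a1 a2 : G) (x1 x2 : A) (v : V) : V :=
  rho x1 (mu x2 v) - eps a1 a2 *: mu x2 (rho x1 v) - mu (br x1 x2) v.

Definition Sop (G : zmodType) (K : fieldType) (eps : G -> G -> K)
    (A V : vectType K) (mul : A -> A -> A) (rho mu : A -> V -> V)
    (a1 a2 : G) (x1 x2 : A) (v : V) : V :=
  mu x1 (rho x2 v) + eps a1 a2 *: mu x2 (rho x1 v) - rho (mul x1 x2) v.

Definition graded_linear_action (G : zmodType) (K : fieldType) (A V : vectType K)
    (DA : G -> {vspace A}) (DV : G -> {vspace V}) (rep : A -> V -> V) :=
  [/\ forall k x y v, rep (k *: x + y) v = k *: rep x v + rep y v,
      forall x k v w, rep x (k *: v + w) = k *: rep x v + rep x w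
    & forall a b x v, x \in DA b -> v \in DV a -> rep x v \in DV (a + b)].

Definition assoc_rep (G : zmodType) (K : fieldType) (A V : vectType K)
    (DA : G -> {vspace A}) (DV : G -> {vspace V}) (mul : A -> A -> A)
    (mu : A -> V -> V) :=
  graded_linear_action DA DV mu /\ forall x y v, mu (mul x y) v = mu x (mu y v).

Definition lie_rep (G : zmodType) (K : fieldType) (eps : G -> G -> K)
    (A V : vectType K) (DA : G -> {vspace A}) (DV : G -> {vspace V})
    (br : A -> A -> A) (rho : A -> V -> V) :=
  graded_linear_action DA DV rho /\
  forall a b x y v, x \in DA a -> y \in DA b ->
    rho (br x y) v = rho x (rho y v) - eps a b *: rho y (rho x v).

Definition F_manifold_rep (G : zmodType) (K : fieldType) (eps : G -> G -> K)
    (A V : vectType K) (DA : G -> {vspace A}) (DV : G -> {vspace V})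
    (mul br : A -> A -> A) (rho mu : A -> V -> V) :=
  [/\ graded_space DV, lie_rep eps DA DV br rho, assoc_rep DA DV mul mu,
      forall a1 a2 a3 x1 x2 x3 v, x1 \in DA a1 -> x2 \in DA a2 -> x3 \in DA a3 ->
        Rop eps br rho mu (a1 + a2) a3 (mul x1 x2) x3 v
        = mu x1 (Rop eps br rho mu a2 a3 x2 x3 v)
          + eps a1 a2 *: mu x2 (Rop eps br rho mu a1 a3 x1 x3 v)
    & forall a1 a2 a3 x1 x2 x3 v, x1 \in DA a1 -> x2 \in DA a2 -> x3 \in DA a3 ->
        mu (Pop eps mul br a1 a2 x1 x2 x3) v
        = eps a1 (a2 + a3) *: Sop eps mul rho mu a2 a3 x2 x3 (mu x1 v)
          - mu x1 (Sop eps mul rho mu a2 a3 x2 x3 v)].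

Definition sum_grading (G : zmodType) (K : fieldType) (A V : vectType K)
    (DA : G -> {vspace A}) (DV : G -> {vspace V}) (g : G) : {vspace (A * V)%type} :=
  (linfun (fun x : A => (x, 0 : V)) @: DA g + linfun (fun v : V => (0 : A, v)) @: DV g)%VS.

From HB Require Import structures.
From mathcomp Require Import all_boot all_order all_algebra sesquilinear.
From mathcomp Require Import ring.

Set Implicit Arguments.
Unset Strict Implicit.
Unset Printing Implicit Defensive.
Import GRing.Theory.
Local Open Scope ring_scope.

(* The two products on A (+) V are bilinear and every axiom to be checked is
   multilinear in homogeneous arguments, so it suffices to check the axioms when
   each argument lies in some A_g (+) 0 or 0 (+) V_g.  The projection onto A is a
   morphism for both products and V is an ideal with V V = 0, so every term with
   two arguments in V vanishes.  With all arguments in A the axioms are those of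
   A; with exactly one argument in V they are exactly the axioms of the
   representation: rho([x,y]) = [rho x, rho y] gives the Jacobi identity,
   mu(x y) = mu x mu y associativity, and the conditions on R and S the
   F-manifold compatibility. *)

Lemma bilinear_op_for (K : fieldType) (V : vectType K) (op : V -> V -> V) :
  bilinear_op op -> bilinear_for *:%R *:%R op.
Proof. by case=> opl opr; split=> z k x y; [exact: opl | exact: opr]. Qed.

Lemma graded_linear_action_bilinear (G : zmodType) (K : fieldType) (A V : vectType K)
    (DA : G -> {vspace A}) (DV : G -> {vspace V}) (rep : A -> V -> V) :
  graded_linear_action DA DV rep -> bilinear_for *:%R *:%R rep.
Proof. by case=> repl repr _; split=> z k x y; [exact: repl | exact: repr]. Qed.

Lemma addrACA_subZ (K : fieldType) (M : lmodType K) k (p p' q q' r r' : M) :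
  (p + p') - (q + q') - k *: (r + r') = (p - q - k *: r) + (p' - q' - k *: r').
Proof. by rewrite scalerDr !opprD (addrACA p) (addrACA (p - q)). Qed.

Lemma addrACA3 (M : zmodType) (p p' q q' r r' : M) :
  p + p' + (q + q') + (r + r') = p + q + r + (p' + q' + r').
Proof. by rewrite (addrACA p) (addrACA (p + q)). Qed.

Lemma coord_inj (K : fieldType) (V : vectType K) (u v : V) :
  (forall i, coord (vbasis fullv) i u = coord (vbasis fullv) i v) -> u = v.
Proof.
move=> eq_coord; rewrite (coord_vbasis (memvf u)) (coord_vbasis (memvf v)).
by apply: eq_bigr => i _; rewrite eq_coord.
Qed.

Section GradedSpace.
Variables (G : zmodType) (K : fieldType) (V : vectType K) (D : G -> {vspace V}).
Hypothesis gD : graded_space D.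

Lemma graded_ind (P : V -> Prop) :
    (forall u v, P u -> P v -> P (u + v)) -> (forall g v, v \in D g -> P v) ->
  forall v, P v.
Proof.
move=> PD PDg v; case: gD => s [_ _ fullD _].
have: v \in (\sum_(g <- s) D g)%VS by rewrite fullD memvf.
elim: s {fullD} v => [|g s IHs] v.
  by rewrite big_nil memv0 => /eqP->; apply: (PDg 0); apply: mem0v.
by rewrite big_cons => /memv_addP[u /PDg Pu [w /IHs Pw ->]]; apply: PD.
Qed.

Lemma sum_dimv_graded (s : seq G) :
    uniq s -> (forall g, D g != 0%VS -> g \in s) ->
  (\sum_(g <- s) \dim (D g))%N = \dim {:V}.
Proof.
move=> s_uniq s_supp; case: gD => s0 [? s0_supp fullD].
rewrite directvE /= fullD => /eqP->; apply: perm_big_supp.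
apply: uniq_perm; rewrite ?filter_uniq // => g; rewrite !mem_filter dimv_eq0.
apply/andb_id2l => Dg_neq0; rewrite s_supp //; apply/esym.
by apply: contraTT Dg_neq0 => /s0_supp->; rewrite eqxx.
Qed.

End GradedSpace.

Section SumGrading.
Variables (G : zmodType) (K : fieldType) (A V : vectType K).
Variables (DA : G -> {vspace A}) (DV : G -> {vspace V}).

Definition pair_inl (x : A) : A * V := (x, 0).
Definition pair_inr (v : V) : A * V := (0, v).

Fact pair_inl_is_linear : linear pair_inl.
Proof. by move=> k x y; rewrite /pair_inl -[RHS]/(_, k *: 0 + 0) scaler0 addr0. Qed.
Fact pair_inr_is_linear : linear pair_inr.
Proof. by move=> k x y; rewrite /pair_inr -[RHS]/(k *: 0 + 0, _) scaler0 addr0. Qed.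
HB.instance Definition _ := GRing.isLinear.Build K A (A * V)%type _ pair_inl
  pair_inl_is_linear.
HB.instance Definition _ := GRing.isLinear.Build K V (A * V)%type _ pair_inr
  pair_inr_is_linear.

Lemma pair_inlD (x x' : A) : ((x + x', 0) : A * V) = (x, 0) + (x', 0).
Proof. exact: (linearD pair_inl). Qed.
Lemma pair_inrD (v v' : V) : ((0, v + v') : A * V) = (0, v) + (0, v').
Proof. exact: (linearD pair_inr). Qed.

Lemma pair_split (z : A * V) : z = (z.1, 0) + (0, z.2).
Proof. by case: z => x v; rewrite -[RHS]/(x + 0, 0 + v) addr0 add0r. Qed.

Lemma mem_sum_grading g z :
  (z \in sum_grading DA DV g) = (z.1 \in DA g) && (z.2 \in DV g).
Proof.
apply/memv_addP/andP => [[_ /memv_imgP[x DAx ->] [_ /memv_imgP[v DVv ->] ->]]|].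
  by rewrite !(lfunE pair_inl) !(lfunE pair_inr) /= addr0 add0r.
case=> DAz DVz; exists (z.1, 0); first by rewrite -[(z.1, 0)](lfunE pair_inl) memv_img.
exists (0, z.2); first by rewrite -[(0, z.2)](lfunE pair_inr) memv_img.
exact: pair_split.
Qed.

Definition pure g (z : A * V) :=
  (exists2 x, x \in DA g & z = (x, 0)) \/ (exists2 v, v \in DV g & z = (0, v)).

Lemma sum_grading_ind g (P : A * V -> Prop) :
    (forall z z', P z -> P z' -> P (z + z')) -> (forall z, pure g z -> P z) ->
  forall z, z \in sum_grading DA DV g -> P z.
Proof.
move=> PD Ppure z; rewrite mem_sum_grading => /andP[DAz DVz].
by rewrite [z]pair_split; apply: PD; apply: Ppure; [left; exists z.1 | right; exists z.2].
Qed.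

Lemma sum_grading_ind3 a b c (P : A * V -> A * V -> A * V -> Prop) :
    (forall x x' y z, P x y z -> P x' y z -> P (x + x') y z) ->
    (forall x y y' z, P x y z -> P x y' z -> P x (y + y') z) ->
    (forall x y z z', P x y z -> P x y z' -> P x y (z + z')) ->
    (forall x y z, pure a x -> pure b y -> pure c z -> P x y z) ->
  forall x y z, x \in sum_grading DA DV a -> y \in sum_grading DA DV b ->
    z \in sum_grading DA DV c -> P x y z.
Proof.
move=> PDx PDy PDz Ppure x y z SGx SGy SGz.
move: x SGx; apply: sum_grading_ind => [x x'|x px]; first exact: PDx.
move: y SGy; apply: sum_grading_ind => [y y'|y py]; first exact: PDy.
move: z SGz; apply: sum_grading_ind => [z z'|z pz]; first exact: PDz.
exact: Ppure.
Qed.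

Hypotheses (gA : graded_space DA) (gV : graded_space DV).

Lemma prod_ind (P : A * V -> Prop) :
    (forall z z', P z -> P z' -> P (z + z')) -> (forall g z, pure g z -> P z) ->
  forall z, P z.
Proof.
move=> PD Ppure z; rewrite [z]pair_split; apply: (PD).
  elim/(graded_ind gA): z.1 => [x x'|g x DAx]; first by rewrite pair_inlD; apply: PD.
  by apply: (Ppure g); left; exists x.
elim/(graded_ind gV): z.2 => [v v'|g v DVv]; first by rewrite pair_inrD; apply: PD.
by apply: (Ppure g); right; exists v.
Qed.

Lemma prod_ind3 (P : A * V -> A * V -> A * V -> Prop) :
    (forall x x' y z, P x y z -> P x' y z -> P (x + x') y z) ->
    (forall x y y' z, P x y z -> P x y' z -> P x (y + y') z) ->
    (forall x y z z', P x y z -> P x y z' -> P x y (z + z')) ->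
    (forall a b c x y z, pure a x -> pure b y -> pure c z -> P x y z) ->
  forall x y z, P x y z.
Proof.
move=> PDx PDy PDz Ppure x y z.
elim/prod_ind: x => [x x'|a x px]; first exact: PDx.
elim/prod_ind: y => [y y'|b y py]; first exact: PDy.
elim/prod_ind: z => [z z'|c z pz]; first exact: PDz.
exact: Ppure px py pz.
Qed.

Lemma sum_grading_graded : graded_space (sum_grading DA DV).
Proof.
have [sA [_ sA_supp _ _]] := gA; have [sV [_ sV_supp _ _]] := gV.
pose s := undup (sA ++ sV).
have s_supp g : g \notin s -> DA g = 0%VS /\ DV g = 0%VS.
  by rewrite mem_undup mem_cat negb_or => /andP[/sA_supp-> /sV_supp->].
have SG0 g : g \notin s -> sum_grading DA DV g = 0%VS.
  by case/s_supp=> DA0 DV0; rewrite /sum_grading DA0 DV0 !limg0 addv0.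
have SG_full : (\sum_(g <- s) sum_grading DA DV g)%VS = fullv.
  apply/eqP; rewrite eqEsubv subvf; apply/subvP => z _.
  have mem_sum g y :
      y \in sum_grading DA DV g -> y \in (\sum_(g <- s) sum_grading DA DV g)%VS.
    have [s_g|/SG0->] := boolP (g \in s); last by rewrite memv0 => /eqP->; exact: mem0v.
    by rewrite (big_rem _ s_g); apply: subvP; apply: addvSl.
  elim/prod_ind: z => [z z'|g _ [[x DAx ->]|[v DVv ->]]]; first exact: memvD.
    by apply: (mem_sum g); rewrite mem_sum_grading DAx mem0v.
  by apply: (mem_sum g); rewrite mem_sum_grading DVv mem0v.
exists s; split; [exact: undup_uniq | exact: SG0 | exact: SG_full |].
have dim_SG g : (\dim (sum_grading DA DV g) <= \dim (DA g) + \dim (DV g))%N.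
  apply: leq_trans (dimv_add_leqif _ _) _; apply: leq_add.
    by rewrite -[leqRHS](limg_ker_dim (linfun pair_inl)) leq_addl.
  by rewrite -[leqRHS](limg_ker_dim (linfun pair_inr)) leq_addl.
have s_suppA g : DA g != 0%VS -> g \in s.
  by apply: contraR => /s_supp[-> _]; rewrite eqxx.
have s_suppV g : DV g != 0%VS -> g \in s.
  by apply: contraR => /s_supp[_ ->]; rewrite eqxx.
rewrite directvE /= eqn_leq dimv_leq_sum /= SG_full dimvf.
apply: leq_trans (leq_sum s (fun g _ => dim_SG g)) _.
by rewrite big_split /= !sum_dimv_graded ?undup_uniq // !dimvf.
Qed.

End SumGrading.

Section SemidirectOp.
Variables (G : zmodType) (K : fieldType) (A V : vectType K).
Variables (DA : G -> {vspace A}) (DV : G -> {vspace V}).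
Hypotheses (gA : graded_space DA) (gV : graded_space DV).
Variables (op : A * V -> A * V -> A * V) (f : A -> A -> A) (lact ract : A -> V -> V).
Variable c : G -> G -> K.
Hypotheses (op_bil : bilinear_op op) (f_bil : bilinear_op f).
Hypotheses (lact_act : graded_linear_action DA DV lact).
Hypotheses (ract_act : graded_linear_action DA DV ract).
Hypothesis op_hom : forall a b x1 v1 x2 v2, x1 \in DA a -> v1 \in DV a ->
  x2 \in DA b -> v2 \in DV b ->
  op (x1, v1) (x2, v2) = (f x1 x2, lact x1 v2 + c a b *: ract x2 v1).
(* Every lemma below takes all the hypotheses of the section, so that all of
   them are specialised in the same way to the two products of A (+) V. *)
#[local] Set Default Proof Using "All".

HB.instance Definition _ :=
  bilinear_isBilinear.Build K _ _ _ *:%R *:%R op (bilinear_op_for op_bil).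
HB.instance Definition _ :=
  bilinear_isBilinear.Build K _ _ _ *:%R *:%R f (bilinear_op_for f_bil).
HB.instance Definition _ := bilinear_isBilinear.Build K _ _ _ *:%R *:%R lact
  (graded_linear_action_bilinear lact_act).
HB.instance Definition _ := bilinear_isBilinear.Build K _ _ _ *:%R *:%R ract
  (graded_linear_action_bilinear ract_act).

Lemma op_inl x y : op (x, 0) (y, 0) = (f x y, 0).
Proof.
elim/(graded_ind gA): x y => [x x' IHx IHx'|a x DAx] y.
  by rewrite pair_inlD linearDl /= IHx IHx' linearDl pair_inlD.
elim/(graded_ind gA): y => [y y' IHy IHy'|b y DAy].
  by rewrite pair_inlD linearDr /= IHy IHy' linearDr pair_inlD.
by rewrite (op_hom DAx (mem0v _) DAy (mem0v _)) linear0r linear0r scaler0 addr0.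
Qed.

Lemma op_inl_inr x v : op (x, 0) (0, v) = (0, lact x v).
Proof.
elim/(graded_ind gA): x v => [x x' IHx IHx'|a x DAx] v.
  by rewrite pair_inlD linearDl /= IHx IHx' linearDl pair_inrD.
elim/(graded_ind gV): v => [v v' IHv IHv'|b v DVv].
  by rewrite pair_inrD linearDr /= IHv IHv' linearDr pair_inrD.
by rewrite (op_hom DAx (mem0v _) (mem0v _) DVv) linear0r linear0l scaler0 addr0.
Qed.

Lemma op_inr v w : op (0, v) (0, w) = 0.
Proof.
elim/(graded_ind gV): v w => [v v' IHv IHv'|a v DVv] w.
  by rewrite pair_inrD linearDl /= IHv IHv' addr0.
elim/(graded_ind gV): w => [w w' IHw IHw'|b w DVw].
  by rewrite pair_inrD linearDr /= IHw IHw' addr0.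
by rewrite (op_hom (mem0v _) DVv (mem0v _) DVw) linear0r !linear0l scaler0 addr0.
Qed.

Lemma op_inr_inl a b v y : v \in DV a -> y \in DA b ->
  op (0, v) (y, 0) = (0, c a b *: ract y v).
Proof.
by move=> DVv DAy; rewrite (op_hom (mem0v _) DVv DAy (mem0v _)) linear0l linear0r add0r.
Qed.

Lemma fst_op z z' : (op z z').1 = f z.1 z'.1.
Proof.
elim/(prod_ind gA gV): z z' => [z1 z2 IH1 IH2|a _ [[x DAx ->]|[v DVv ->]]] z'.
  by rewrite !linearDl /= IH1 IH2.
all: elim/(prod_ind gA gV): z' => [z1 z2 IH1 IH2|b _ [[y DAy ->]|[w DVw ->]]].
- by rewrite !linearDr /= IH1 IH2.
- by rewrite op_inl.
- by rewrite op_inl_inr linear0r.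
- by rewrite !linearDr /= IH1 IH2.
- by rewrite (op_inr_inl DVv DAy) linear0l.
- by rewrite op_inr linear0l.
Qed.

Lemma op_fst0l z z' : z.1 = 0 -> (op z z').1 = 0.
Proof. by move=> z0; rewrite fst_op z0 linear0l. Qed.

Lemma op_fst0r z z' : z'.1 = 0 -> (op z z').1 = 0.
Proof. by move=> z0; rewrite fst_op z0 linear0r. Qed.

Lemma op_V z z' : z.1 = 0 -> z'.1 = 0 -> op z z' = 0.
Proof. by case: z z' => [x v] [y w] /= -> ->; exact: op_inr. Qed.

Lemma op_graded : graded_op DA f -> graded_op (sum_grading DA DV) op.
Proof.
move=> f_graded a b z z'; rewrite !mem_sum_grading => /andP[DAz DVz] /andP[DAz' DVz'].
rewrite [z]surjective_pairing [z']surjective_pairing (op_hom DAz DVz DAz' DVz') /=.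
case: lact_act ract_act => [_ _ lact_graded] [_ _ ract_graded].
rewrite f_graded //= memvD ?memvZ //; first by rewrite addrC lact_graded.
exact: ract_graded.
Qed.

End SemidirectOp.

Section PopAdditive.
Variables (G : zmodType) (K : fieldType) (eps : G -> G -> K).
Variables (U : vectType K) (mul br : U -> U -> U).
Hypotheses (mul_bil : bilinear_op mul) (br_bil : bilinear_op br).
HB.instance Definition _ :=
  bilinear_isBilinear.Build K _ _ _ *:%R *:%R mul (bilinear_op_for mul_bil).
HB.instance Definition _ :=
  bilinear_isBilinear.Build K _ _ _ *:%R *:%R br (bilinear_op_for br_bil).

Lemma PopDl a b x x' y z :
  Pop eps mul br a b (x + x') y z = Pop eps mul br a b x y z + Pop eps mul br a b x' y z.
Proof. by rewrite /Pop !(linearDl, linearDr) /= addrACA_subZ. Qed.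

Lemma PopDm a b x y y' z :
  Pop eps mul br a b x (y + y') z = Pop eps mul br a b x y z + Pop eps mul br a b x y' z.
Proof. by rewrite /Pop !(linearDl, linearDr) /= addrACA_subZ. Qed.

Lemma PopDr a b x y z z' :
  Pop eps mul br a b x y (z + z') = Pop eps mul br a b x y z + Pop eps mul br a b x y z'.
Proof. by rewrite /Pop !(linearDl, linearDr) /= addrACA_subZ. Qed.

Lemma Pop0l a b y z : Pop eps mul br a b 0 y z = 0.
Proof. by rewrite /Pop !(linear0l, linear0r) scaler0 !subr0. Qed.

Lemma Pop0m a b x z : Pop eps mul br a b x 0 z = 0.
Proof. by rewrite /Pop !(linear0l, linear0r) scaler0 !subr0. Qed.

Lemma Pop0r a b x y : Pop eps mul br a b x y 0 = 0.
Proof. by rewrite /Pop !(linear0l, linear0r) scaler0 !subr0. Qed.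

End PopAdditive.

Section SemidirectProduct.
Variables (G : zmodType) (K : fieldType) (eps : G -> G -> K).
Hypothesis eps_bichar : skew_bicharacter eps.

Variables (A : vectType K) (DA : G -> {vspace A}) (mul br : A -> A -> A).
Hypotheses (gA : graded_space DA) (mul_bil : bilinear_op mul) (br_bil : bilinear_op br).
Hypotheses (mul_graded : graded_op DA mul) (br_graded : graded_op DA br).
Hypothesis mulA : forall x y z, mul x (mul y z) = mul (mul x y) z.
Hypothesis mulC : forall a b x y, x \in DA a -> y \in DA b -> mul x y = eps a b *: mul y x.
Hypothesis brC :
  forall a b x y, x \in DA a -> y \in DA b -> br x y = - (eps a b *: br y x).
Hypothesis brJ : forall a b c x y z, x \in DA a -> y \in DA b -> z \in DA c ->
  eps c a *: br x (br y z) + eps b c *: br z (br x y) + eps a b *: br y (br z x) = 0.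
Hypothesis Pop_mul : forall a b c x y z w, x \in DA a -> y \in DA b -> z \in DA c ->
  Pop eps mul br (a + b) c (mul x y) z w
  = mul x (Pop eps mul br b c y z w) + eps a b *: mul y (Pop eps mul br a c x z w).

Variables (V : vectType K) (DV : G -> {vspace V}) (rho mu : A -> V -> V).
Hypothesis gV : graded_space DV.
Hypothesis rho_act : graded_linear_action DA DV rho.
Hypothesis mu_act : graded_linear_action DA DV mu.
Hypothesis rho_br : forall a b x y v, x \in DA a -> y \in DA b ->
  rho (br x y) v = rho x (rho y v) - eps a b *: rho y (rho x v).
Hypothesis mu_mul : forall x y v, mu (mul x y) v = mu x (mu y v).
Hypothesis Rop_mul : forall a1 a2 a3 x1 x2 x3 v,
  x1 \in DA a1 -> x2 \in DA a2 -> x3 \in DA a3 ->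
  Rop eps br rho mu (a1 + a2) a3 (mul x1 x2) x3 v
  = mu x1 (Rop eps br rho mu a2 a3 x2 x3 v)
    + eps a1 a2 *: mu x2 (Rop eps br rho mu a1 a3 x1 x3 v).
Hypothesis mu_Pop : forall a1 a2 a3 x1 x2 x3 v,
  x1 \in DA a1 -> x2 \in DA a2 -> x3 \in DA a3 ->
  mu (Pop eps mul br a1 a2 x1 x2 x3) v
  = eps a1 (a2 + a3) *: Sop eps mul rho mu a2 a3 x2 x3 (mu x1 v)
    - mu x1 (Sop eps mul rho mu a2 a3 x2 x3 v).

Variables (br_rho mul_mu : A * V -> A * V -> A * V).
Hypotheses (br_rho_bil : bilinear_op br_rho) (mul_mu_bil : bilinear_op mul_mu).
Hypothesis br_rho_hom : forall a b x1 v1 x2 v2, x1 \in DA a -> v1 \in DV a ->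
  x2 \in DA b -> v2 \in DV b ->
  br_rho (x1, v1) (x2, v2) = (br x1 x2, rho x1 v2 - eps a b *: rho x2 v1).
Hypothesis mul_mu_hom : forall a b x1 v1 x2 v2, x1 \in DA a -> v1 \in DV a ->
  x2 \in DA b -> v2 \in DV b ->
  mul_mu (x1, v1) (x2, v2) = (mul x1 x2, mu x1 v2 + eps a b *: mu x2 v1).

Local Notation SG := (sum_grading DA DV).
Local Notation PA := (Pop eps mul br).
Local Notation PS := (Pop eps mul_mu br_rho).
Local Notation R := (Rop eps br rho mu).
Local Notation S := (Sop eps mul rho mu).

HB.instance Definition _ :=
  bilinear_isBilinear.Build K _ _ _ *:%R *:%R mul (bilinear_op_for mul_bil).
HB.instance Definition _ :=
  bilinear_isBilinear.Build K _ _ _ *:%R *:%R br (bilinear_op_for br_bil).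
HB.instance Definition _ := bilinear_isBilinear.Build K _ _ _ *:%R *:%R rho
  (graded_linear_action_bilinear rho_act).
HB.instance Definition _ := bilinear_isBilinear.Build K _ _ _ *:%R *:%R mu
  (graded_linear_action_bilinear mu_act).
HB.instance Definition _ :=
  bilinear_isBilinear.Build K _ _ _ *:%R *:%R mul_mu (bilinear_op_for mul_mu_bil).
HB.instance Definition _ :=
  bilinear_isBilinear.Build K _ _ _ *:%R *:%R br_rho (bilinear_op_for br_rho_bil).

Let eps_neq0 a b : eps a b != 0. Proof. by case: eps_bichar. Qed.
Let epsK a b : eps a b * eps b a = 1. Proof. by case: eps_bichar. Qed.
Let epsDr a b c : eps a (b + c) = eps a b * eps a c. Proof. by case: eps_bichar. Qed.
Let epsDl a b c : eps (a + b) c = eps a c * eps b c. Proof. by case: eps_bichar. Qed.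
Let epsV a b : eps b a = (eps a b)^-1.
Proof. by apply: (mulfI (eps_neq0 a b)); rewrite epsK divff. Qed.

Let rho_graded a b x v : x \in DA b -> v \in DV a -> rho x v \in DV (a + b).
Proof. by case: rho_act => _ _; apply. Qed.
Let mu_graded a b x v : x \in DA b -> v \in DV a -> mu x v \in DV (a + b).
Proof. by case: mu_act => _ _; apply. Qed.

Let br_rho_hom' a b x1 v1 x2 v2 : x1 \in DA a -> v1 \in DV a ->
    x2 \in DA b -> v2 \in DV b ->
  br_rho (x1, v1) (x2, v2) = (br x1 x2, rho x1 v2 + (- eps a b) *: rho x2 v1).
Proof. by move=> *; rewrite scaleNr; apply: br_rho_hom. Qed.

Let mul_mu_inl := op_inl gA gV mul_mu_bil mul_bil mu_act mu_act mul_mu_hom.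
Let mul_mu_inl_inr := op_inl_inr gA gV mul_mu_bil mul_bil mu_act mu_act mul_mu_hom.
Let mul_mu_inr := op_inr gA gV mul_mu_bil mul_bil mu_act mu_act mul_mu_hom.
Let mul_mu_inr_inl := op_inr_inl gA gV mul_mu_bil mul_bil mu_act mu_act mul_mu_hom.
Let mul_mu_fst := fst_op gA gV mul_mu_bil mul_bil mu_act mu_act mul_mu_hom.
Let mul_mu_fst0l := op_fst0l gA gV mul_mu_bil mul_bil mu_act mu_act mul_mu_hom.
Let mul_mu_fst0r := op_fst0r gA gV mul_mu_bil mul_bil mu_act mu_act mul_mu_hom.
Let mul_mu_V := op_V gA gV mul_mu_bil mul_bil mu_act mu_act mul_mu_hom.
Let br_rho_inl := op_inl gA gV br_rho_bil br_bil rho_act rho_act br_rho_hom'.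
Let br_rho_inl_inr := op_inl_inr gA gV br_rho_bil br_bil rho_act rho_act br_rho_hom'.
Let br_rho_inr_inl := op_inr_inl gA gV br_rho_bil br_bil rho_act rho_act br_rho_hom'.
Let br_rho_fst := fst_op gA gV br_rho_bil br_bil rho_act rho_act br_rho_hom'.
Let br_rho_fst0l := op_fst0l gA gV br_rho_bil br_bil rho_act rho_act br_rho_hom'.
Let br_rho_fst0r := op_fst0r gA gV br_rho_bil br_bil rho_act rho_act br_rho_hom'.
Let br_rho_V := op_V gA gV br_rho_bil br_bil rho_act rho_act br_rho_hom'.

Lemma mul_mu_comm a b z z' : z \in SG a -> z' \in SG b ->
  mul_mu z z' = eps a b *: mul_mu z' z.
Proof.
rewrite !mem_sum_grading => /andP[DAz DVz] /andP[DAz' DVz'].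
rewrite [z]surjective_pairing [z']surjective_pairing.
rewrite (mul_mu_hom DAz DVz DAz' DVz') (mul_mu_hom DAz' DVz' DAz DVz) (mulC DAz DAz').
by rewrite -[RHS]/(_, _) scalerDr scalerA epsK scale1r addrC.
Qed.

Lemma br_rho_skew a b z z' : z \in SG a -> z' \in SG b ->
  br_rho z z' = - (eps a b *: br_rho z' z).
Proof.
rewrite !mem_sum_grading => /andP[DAz DVz] /andP[DAz' DVz'].
rewrite [z]surjective_pairing [z']surjective_pairing.
rewrite (br_rho_hom DAz DVz DAz' DVz') (br_rho_hom DAz' DVz' DAz DVz) (brC DAz DAz').
by congr (_, _); rewrite /= scalerBr scalerA epsK scale1r opprB.
Qed.

Let mu_comm a c x z v : x \in DA a -> z \in DA c ->
  mu x (mu z v) = eps a c *: mu z (mu x v).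
Proof. by move=> DAx DAz; rewrite -!mu_mul (mulC DAx DAz) linearZl. Qed.

Lemma mul_mu_assoc x y z : mul_mu x (mul_mu y z) = mul_mu (mul_mu x y) z.
Proof.
move: x y z; apply: (prod_ind3 gA gV).
- by move=> x x' y z IH IH'; rewrite !linearDl /= IH IH'.
- by move=> x y y' z IH IH'; rewrite linearDl !linearDr /= IH IH' linearDl.
- by move=> x y z z' IH IH'; rewrite !linearDr /= IH IH'.
move=> a b c _ _ _ [[x DAx ->]|[v DVv ->]] [[y DAy ->]|[w DVw ->]] [[z DAz ->]|[u DVu ->]].
- by rewrite !mul_mu_inl mulA.
- by rewrite mul_mu_inl !mul_mu_inl_inr mu_mul.
- rewrite (mul_mu_inr_inl DVw DAz) !mul_mu_inl_inr (mul_mu_inr_inl (mu_graded DAx DVw) DAz).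
  by rewrite linearZr /= (mu_comm _ DAx DAz) scalerA epsDl mulrC.
- by rewrite mul_mu_inr linear0r mul_mu_inl_inr mul_mu_inr.
- rewrite mul_mu_inl (mul_mu_inr_inl DVv (mul_graded DAy DAz)) (mul_mu_inr_inl DVv DAy).
  rewrite (mul_mu_inr_inl (memvZ _ (mu_graded DAy DVv)) DAz) mu_mul.
  rewrite (mu_comm _ DAy DAz) !linearZr /= !scalerA epsDl epsDr.
  by congr (_, _ *: _); ring.
- by rewrite mul_mu_inl_inr mul_mu_inr (mul_mu_inr_inl DVv DAy) mul_mu_inr.
- by rewrite (mul_mu_inr_inl DVw DAz) !mul_mu_inr linear0l.
- by rewrite !mul_mu_inr.
Qed.

Definition jacobiator a b c x y z :=
  eps c a *: br_rho x (br_rho y z) + eps b c *: br_rho z (br_rho x y)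
  + eps a b *: br_rho y (br_rho z x).

Lemma jacobiator_cycle a b c x y z : jacobiator a b c x y z = jacobiator b c a y z x.
Proof. by rewrite /jacobiator addrC addrA. Qed.

Lemma jacobiatorDl a b c x x' y z :
  jacobiator a b c (x + x') y z = jacobiator a b c x y z + jacobiator a b c x' y z.
Proof. by rewrite /jacobiator !(linearDl, linearDr) /= !scalerDr addrACA3. Qed.

Lemma jacobiatorDm a b c x y y' z :
  jacobiator a b c x (y + y') z = jacobiator a b c x y z + jacobiator a b c x y' z.
Proof. by rewrite /jacobiator !(linearDl, linearDr) /= !scalerDr addrACA3. Qed.

Lemma jacobiatorDr a b c x y z z' :
  jacobiator a b c x y (z + z') = jacobiator a b c x y z + jacobiator a b c x y z'.
Proof. by rewrite /jacobiator !(linearDl, linearDr) /= !scalerDr addrACA3. Qed.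

Lemma jacobiator_V a b c x y z : x.1 = 0 -> y.1 = 0 -> jacobiator a b c x y z = 0.
Proof.
move=> x0 y0; rewrite /jacobiator (br_rho_V y0 (br_rho_fst0r z x0)) (br_rho_V x0 y0).
by rewrite (br_rho_V x0 (br_rho_fst0l z y0)) linear0r !scaler0 !addr0.
Qed.

Lemma jacobiator_inl a b c x y z : x \in DA a -> y \in DA b -> z \in DA c ->
  jacobiator a b c (x, 0) (y, 0) (z, 0) = 0.
Proof.
move=> DAx DAy DAz; rewrite /jacobiator !br_rho_inl.
by apply: injective_projections => /=; [exact: brJ | rewrite !scaler0 !addr0].
Qed.

Lemma jacobiator_inl_inl_inr a b c x y w : x \in DA a -> y \in DA b -> w \in DV c ->
  jacobiator a b c (x, 0) (y, 0) (0, w) = 0.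
Proof.
move=> DAx DAy DVw; rewrite /jacobiator !br_rho_inl_inr br_rho_inl.
rewrite (br_rho_inr_inl DVw (br_graded DAx DAy)) (br_rho_inr_inl DVw DAx) br_rho_inl_inr.
apply: injective_projections => /=; first by rewrite !scaler0 !addr0.
rewrite (rho_br _ DAx DAy) !linearZr /=.
apply: coord_inj => i; rewrite !(linearE, linearN) /= epsDr (epsV b c).
by field.
Qed.

Lemma jacobiator_graded a b c x y z : x \in SG a -> y \in SG b -> z \in SG c ->
  jacobiator a b c x y z = 0.
Proof.
move: x y z; apply: sum_grading_ind3 => [x x' y z Jx Jx'|x y y' z Jy Jy'|x y z z' Jz Jz'|].
- by rewrite jacobiatorDl Jx Jx' addr0.
- by rewrite jacobiatorDm Jy Jy' addr0.
- by rewrite jacobiatorDr Jz Jz' addr0.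
move=> _ _ _ [[x DAx ->]|[v DVv ->]] [[y DAy ->]|[w DVw ->]] [[z DAz ->]|[u DVu ->]].
- exact: jacobiator_inl.
- exact: jacobiator_inl_inl_inr.
- by rewrite 2!jacobiator_cycle jacobiator_inl_inl_inr.
- by rewrite jacobiator_cycle jacobiator_V.
- by rewrite jacobiator_cycle jacobiator_inl_inl_inr.
- by rewrite 2!jacobiator_cycle jacobiator_V.
- exact: jacobiator_V.
- exact: jacobiator_V.
Qed.

Let PA_graded a b c x y z : x \in DA a -> y \in DA b -> z \in DA c ->
  PA a b x y z \in DA (a + b + c).
Proof.
move=> DAx DAy DAz; rewrite /Pop !memvB ?memvZ //.
- by rewrite -addrA br_graded ?mul_graded.
- by rewrite mul_graded ?br_graded.
by rewrite addrAC [a + c + b]addrC mul_graded ?br_graded.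
Qed.

Let PSDl := PopDl eps mul_mu_bil br_rho_bil.
Let PSDm := PopDm eps mul_mu_bil br_rho_bil.
Let PSDr := PopDr eps mul_mu_bil br_rho_bil.
Let PS0l := Pop0l eps mul_mu_bil br_rho_bil.

Lemma PS_fst a b x y z : (PS a b x y z).1 = PA a b x.1 y.1 z.1.
Proof. by rewrite /Pop /= !(mul_mu_fst, br_rho_fst). Qed.

Lemma PS_fst0l a b x y z : x.1 = 0 -> (PS a b x y z).1 = 0.
Proof. by move=> x0; rewrite PS_fst x0 Pop0l. Qed.

Lemma PS_fst0m a b x y z : y.1 = 0 -> (PS a b x y z).1 = 0.
Proof. by move=> y0; rewrite PS_fst y0 Pop0m. Qed.

Lemma PS_fst0r a b x y z : z.1 = 0 -> (PS a b x y z).1 = 0.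
Proof. by move=> z0; rewrite PS_fst z0 Pop0r. Qed.

Lemma PS_Vxy a b x y z : x.1 = 0 -> y.1 = 0 -> PS a b x y z = 0.
Proof.
move=> x0 y0; rewrite /Pop (br_rho_V x0 (mul_mu_fst0l z y0)) (br_rho_V x0 y0).
by rewrite (mul_mu_V y0 (br_rho_fst0l z x0)) linear0l scaler0 !subr0.
Qed.

Lemma PS_Vxz a b x y z : x.1 = 0 -> z.1 = 0 -> PS a b x y z = 0.
Proof.
move=> x0 z0; rewrite /Pop (br_rho_V x0 (mul_mu_fst0r y z0)) (br_rho_V x0 z0).
by rewrite (mul_mu_V (br_rho_fst0l y x0) z0) linear0r scaler0 !subr0.
Qed.

Lemma PS_Vyz a b x y z : y.1 = 0 -> z.1 = 0 -> PS a b x y z = 0.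
Proof.
move=> y0 z0; rewrite /Pop (mul_mu_V y0 z0) (mul_mu_V (br_rho_fst0r x y0) z0).
by rewrite (mul_mu_V y0 (br_rho_fst0r x z0)) linear0r scaler0 !subr0.
Qed.

Lemma PS_inl a b x y z : PS a b (x, 0) (y, 0) (z, 0) = (PA a b x y z, 0).
Proof.
rewrite /Pop !(mul_mu_inl, br_rho_inl).
by apply: injective_projections => //=; rewrite scaler0 !subr0.
Qed.

Lemma PS_inl_inl_inr a b x y u : PS a b (x, 0) (y, 0) (0, u) = (0, R a b x y u).
Proof.
rewrite /Pop !(mul_mu_inl_inr, br_rho_inl_inr) br_rho_inl mul_mu_inl_inr.
by apply: injective_projections => /=; rewrite ?scaler0 ?subr0 // /Rop addrAC.
Qed.

Lemma PS_inl_inr_inl a b d x u w : x \in DA a -> u \in DV b -> w \in DA d ->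
  PS a b (x, 0) (0, u) (w, 0) = (0, eps b d *: R a d x w u).
Proof.
move=> DAx DVu DAw; rewrite /Pop (mul_mu_inr_inl DVu DAw) br_rho_inl_inr br_rho_inl.
rewrite (mul_mu_inr_inl (rho_graded DAx DVu) DAw) (mul_mu_inr_inl DVu (br_graded DAx DAw)).
rewrite br_rho_inl_inr; apply: injective_projections => /=; first by rewrite scaler0 !subr0.
rewrite /Rop !linearZr /=.
apply: coord_inj => i; rewrite !(linearE, linearN) /= !epsDr !epsDl (epsV a b).
by field.
Qed.

Lemma PS_inr_inl_inl a b c v y z : v \in DV a -> y \in DA b -> z \in DA c ->
  PS a b (0, v) (y, 0) (z, 0) = (0, eps a (b + c) *: S b c y z v).
Proof.
move=> DVv DAy DAz; rewrite /Pop mul_mu_inl (br_rho_inr_inl DVv (mul_graded DAy DAz)).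
rewrite (br_rho_inr_inl DVv DAy) (br_rho_inr_inl DVv DAz) mul_mu_inl_inr.
rewrite (mul_mu_inr_inl (memvZ _ (rho_graded DAy DVv)) DAz).
apply: injective_projections => /=; first by rewrite scaler0 !subr0.
rewrite /Sop !linearZr /=.
by apply: coord_inj => i; rewrite !(linearE, linearN) /= !epsDr !epsDl; ring.
Qed.

Let S_scale b c y z k v : S b c y z (k *: v) = k *: S b c y z v.
Proof.
by apply: coord_inj => i; rewrite /Sop !linearZr /= !(linearE, linearN) /=; ring.
Qed.

Definition F_defect a b c x y z w := PS (a + b) c (mul_mu x y) z w
  - mul_mu x (PS b c y z w) - eps a b *: mul_mu y (PS a c x z w).

Lemma F_defectDx a b c x x' y z w :
  F_defect a b c (x + x') y z w = F_defect a b c x y z w + F_defect a b c x' y z w.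
Proof.
rewrite /F_defect [mul_mu (x + x') y]linearDl /= !PSDl [mul_mu (x + x') (_)]linearDl /=.
by rewrite [mul_mu y (_ + _)]linearDr /= addrACA_subZ.
Qed.

Lemma F_defectDy a b c x y y' z w :
  F_defect a b c x (y + y') z w = F_defect a b c x y z w + F_defect a b c x y' z w.
Proof.
rewrite /F_defect [mul_mu x (y + y')]linearDr /= !PSDl [mul_mu x (_ + _)]linearDr /=.
by rewrite [mul_mu (y + y') _]linearDl /= addrACA_subZ.
Qed.

Lemma F_defectDz a b c x y z z' w :
  F_defect a b c x y (z + z') w = F_defect a b c x y z w + F_defect a b c x y z' w.
Proof.
rewrite /F_defect !PSDm [mul_mu x (_ + _)]linearDr [mul_mu y (_ + _)]linearDr /=.
by rewrite addrACA_subZ.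
Qed.

Lemma F_defectDw a b c x y z w w' :
  F_defect a b c x y z (w + w') = F_defect a b c x y z w + F_defect a b c x y z w'.
Proof.
rewrite /F_defect !PSDr [mul_mu x (_ + _)]linearDr [mul_mu y (_ + _)]linearDr /=.
by rewrite addrACA_subZ.
Qed.

Lemma F_defect_Vxy a b c x y z w : x.1 = 0 -> y.1 = 0 -> F_defect a b c x y z w = 0.
Proof.
move=> x0 y0; rewrite /F_defect (mul_mu_V x0 y0) PS0l.
rewrite (mul_mu_V x0 (PS_fst0l _ _ _ _ y0)) (mul_mu_V y0 (PS_fst0l _ _ _ _ x0)).
by rewrite scaler0 !subr0.
Qed.

Lemma F_defect_Vxz a b c x y z w : x.1 = 0 -> z.1 = 0 -> F_defect a b c x y z w = 0.
Proof.
move=> x0 z0; rewrite /F_defect (PS_Vxy _ _ _ (mul_mu_fst0l y x0) z0).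
by rewrite (mul_mu_V x0 (PS_fst0m _ _ _ _ z0)) (PS_Vxy _ _ _ x0 z0) linear0r scaler0 !subr0.
Qed.

Lemma F_defect_Vxw a b c x y z w : x.1 = 0 -> w.1 = 0 -> F_defect a b c x y z w = 0.
Proof.
move=> x0 w0; rewrite /F_defect (PS_Vxz _ _ _ (mul_mu_fst0l y x0) w0).
by rewrite (mul_mu_V x0 (PS_fst0r _ _ _ _ w0)) (PS_Vxz _ _ _ x0 w0) linear0r scaler0 !subr0.
Qed.

Lemma F_defect_Vyz a b c x y z w : y.1 = 0 -> z.1 = 0 -> F_defect a b c x y z w = 0.
Proof.
move=> y0 z0; rewrite /F_defect (PS_Vxy _ _ _ (mul_mu_fst0r x y0) z0) (PS_Vxy _ _ _ y0 z0).
by rewrite (mul_mu_V y0 (PS_fst0m _ _ _ _ z0)) linear0r scaler0 !subr0.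
Qed.

Lemma F_defect_Vyw a b c x y z w : y.1 = 0 -> w.1 = 0 -> F_defect a b c x y z w = 0.
Proof.
move=> y0 w0; rewrite /F_defect (PS_Vxz _ _ _ (mul_mu_fst0r x y0) w0) (PS_Vxz _ _ _ y0 w0).
by rewrite (mul_mu_V y0 (PS_fst0r _ _ _ _ w0)) linear0r scaler0 !subr0.
Qed.

Lemma F_defect_Vzw a b c x y z w : z.1 = 0 -> w.1 = 0 -> F_defect a b c x y z w = 0.
Proof.
by move=> z0 w0; rewrite /F_defect !(PS_Vyz _ _ _ z0 w0) !linear0r scaler0 !subr0.
Qed.

Lemma F_defect_pure a b c x y z w : pure DA DV a x -> pure DA DV b y -> pure DA DV c z ->
  F_defect a b c x y z w = 0.
Proof.
move: x y z; elim/(prod_ind gA gV): w => [w w' Fw Fw' x y z px py pz|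
  d _ [[w DAw ->]|[u DVu ->]] _ _ _ [[x DAx ->]|[v DVv ->]] [[y DAy ->]|[v' DVv' ->]]
  [[z DAz ->]|[u' DVu' ->]]];
  first (by rewrite F_defectDw (Fw _ _ _ px py pz) (Fw' _ _ _ px py pz) addr0);
  try by [apply: F_defect_Vxy | apply: F_defect_Vxz | apply: F_defect_Vxw
       | apply: F_defect_Vyz | apply: F_defect_Vyw | apply: F_defect_Vzw].
- rewrite /F_defect mul_mu_inl !PS_inl !mul_mu_inl.
  apply: injective_projections => /=; last by rewrite scaler0 !subr0.
  by rewrite (Pop_mul _ DAx DAy DAz) -addrA -opprD subrr.
- rewrite /F_defect mul_mu_inl (PS_inl_inr_inl (mul_graded DAx DAy) DVu' DAw).
  rewrite (PS_inl_inr_inl DAy DVu' DAw) (PS_inl_inr_inl DAx DVu' DAw) !mul_mu_inl_inr.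
  apply: injective_projections => /=; first by rewrite scaler0 !subr0.
  rewrite (Rop_mul _ DAx DAy DAw) !linearZr /=.
  by apply: coord_inj => i; rewrite !(linearE, linearN) /=; ring.
- have DVxv' : mu x v' \in DV (a + b) by rewrite addrC mu_graded.
  rewrite /F_defect mul_mu_inl_inr (PS_inr_inl_inl DVxv' DAz DAw).
  rewrite (PS_inr_inl_inl DVv' DAz DAw) PS_inl mul_mu_inl_inr.
  rewrite (mul_mu_inr_inl DVv' (PA_graded DAx DAz DAw)).
  apply: injective_projections => /=; first by rewrite scaler0 !subr0.
  rewrite (mu_Pop _ DAx DAz DAw) !linearZr /=.
  apply: coord_inj => i; rewrite !(linearE, linearN) /= !epsDr !epsDl (epsV a b).
  by field.
- have DVyv : eps a b *: mu y v \in DV (a + b) by rewrite memvZ ?mu_graded.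
  rewrite /F_defect (mul_mu_inr_inl DVv DAy) (PS_inr_inl_inl DVyv DAz DAw).
  rewrite (PS_inr_inl_inl DVv DAz DAw) PS_inl mul_mu_inl_inr.
  rewrite (mul_mu_inr_inl DVv (PA_graded DAy DAz DAw)).
  apply: injective_projections => /=; first by rewrite scaler0 !subr0.
  rewrite (mu_Pop _ DAy DAz DAw) S_scale !linearZr /=.
  by apply: coord_inj => i; rewrite !(linearE, linearN) /= !epsDr !epsDl; ring.
- rewrite /F_defect mul_mu_inl !PS_inl_inl_inr !mul_mu_inl_inr.
  apply: injective_projections => /=; first by rewrite scaler0 !subr0.
  by rewrite (Rop_mul _ DAx DAy DAz) -addrA -opprD subrr.
Qed.

Lemma F_defect_graded a b c x y z w : x \in SG a -> y \in SG b -> z \in SG c ->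
  F_defect a b c x y z w = 0.
Proof.
move=> SGx SGy SGz; move: x y z SGx SGy SGz w.
apply: sum_grading_ind3 => [x x' y z Fx Fx' w|x y y' z Fy Fy' w|x y z z' Fz Fz' w|].
- by rewrite F_defectDx Fx Fx' addr0.
- by rewrite F_defectDy Fy Fy' addr0.
- by rewrite F_defectDz Fz Fz' addr0.
by move=> x y z px py pz w; apply: F_defect_pure.
Qed.

Lemma semidirect_F_manifold_color_alg : F_manifold_color_alg eps SG mul_mu br_rho.
Proof.
have gSG := sum_grading_graded gA gV.
split; [split | split |] => //.
- exact: (op_graded gA gV mul_mu_bil mul_bil mu_act mu_act mul_mu_hom mul_graded).
- exact: mul_mu_assoc.
- exact: mul_mu_comm.
- exact: (op_graded gA gV br_rho_bil br_bil rho_act rho_act br_rho_hom' br_graded).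
- exact: br_rho_skew.
- exact: jacobiator_graded.
move=> a b c x y z w SGx SGy SGz; apply/eqP; rewrite -subr_eq0 opprD addrA.
by apply/eqP; apply: F_defect_graded.
Qed.

End SemidirectProduct.

Theorem proposition3p5 (G : zmodType) (K : closedFieldType)
    (charK0 : [pchar K] =i pred0)
    (eps : G -> G -> K) (Heps : skew_bicharacter eps)
    (A : vectType K) (DA : G -> {vspace A}) (mul br : A -> A -> A)
    (HA : F_manifold_color_alg eps DA mul br)
    (V : vectType K) (DV : G -> {vspace V}) (rho mu : A -> V -> V)
    (HV : F_manifold_rep eps DA DV mul br rho mu)
    (br_rho mul_mu : (A * V)%type -> (A * V)%type -> (A * V)%type)
    (Hbr_bil : bilinear_op br_rho) (Hmul_bil : bilinear_op mul_mu)
    (Hbr_hom : forall a b x1 v1 x2 v2, x1 \in DA a -> v1 \in DV a ->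
        x2 \in DA b -> v2 \in DV b ->
        br_rho (x1, v1) (x2, v2) = (br x1 x2, rho x1 v2 - eps a b *: rho x2 v1))
    (Hmul_hom : forall a b x1 v1 x2 v2, x1 \in DA a -> v1 \in DV a ->
        x2 \in DA b -> v2 \in DV b ->
        mul_mu (x1, v1) (x2, v2) = (mul x1 x2, mu x1 v2 + eps a b *: mu x2 v1)) :
  F_manifold_color_alg eps (sum_grading DA DV) mul_mu br_rho.
Proof.
case: HA => [[gA mul_bil mul_graded mulA mulC] [_ br_bil br_graded brC brJ] Pop_mul].
case: HV => [gV [rho_act rho_br] [mu_act mu_mul] Rop_mul mu_Pop].
exact: (semidirect_F_manifold_color_alg Heps gA mul_bil br_bil mul_graded br_graded
  mulA mulC brC brJ Pop_mul gV rho_act mu_act rho_br mu_mul Rop_mul mu_Pop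
  Hbr_bil Hmul_bil Hbr_hom Hmul_hom).
Qed.
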